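(* Let $U$ be a general quantum walk on a finite graph $G=(V,E)$ with auxiliary space of dimension $d$. Suppose there is a probability distribution $\pi$ on $V$ such that for every basis state $|a,v\rangle$ ($a\in\{1,\dots,d\}$, $v\in V$), the limit $\lim_{T\to\infty}\bar P_T(\cdot|a,v)$ exists and equals $\pi$. Then $\pi$ is the uniform distribution on $V$.
   Context: $\mathcal H=\mathcal H_A\otimes\mathcal H_V$ with orthonormal basis $|a,v\rangle$, $a\in\{1,\dots,d\}$, $v\in V$. A general quantum walk on $G$ is a unitary $U$ on $\mathcal H$ such that each $U|a,v\rangle$ is a linear combination only of $|a',v'\rangle$ with $v'$ equal to $v$ or a neighbour of $v$. $P_t(v|\alpha_0)=\sum_a|\langle a,v|U^t\alpha_0\rangle|^2$, $\bar P_T(v|\alpha_0)=\frac1T\sum_{t=0}^{T-1}P_t(v|\alpha_0)$. *)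

From HB Require Import structures.
From mathcomp Require Import all_boot all_order all_algebra.
From mathcomp Require Import complex.
From mathcomp Require Import all_classical all_reals all_analysis.
Set Implicit Arguments. Unset Strict Implicit. Unset Printing Implicit Defensive.
Import Order.TTheory GRing.Theory Num.Theory.
Import numFieldNormedType.Exports.
Local Open Scope ring_scope.

Section QWalk.
Variables (R : realType) (d : nat) (V : finType).

(* the basis |a,v> of H = H_A (x) H_V, a : 'I_d (i.e. {1..d}), v : V *)
Definition basisT := ('I_d * V)%type.
Notation N := #|{: basisT}|.

Definition bidx (a : 'I_d) (v : V) : 'I_N := enum_rank (a, v).

Definition bvec (a : 'I_d) (v : V) : 'cV[R[i]]_N := delta_mx (bidx a v) ord0.

Definition sqmod (z : R[i]) : R := complex.Re z ^+ 2 + complex.Im z ^+ 2.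

Definition adjmx (U : 'M[R[i]]_N) : 'M[R[i]]_N := (map_mx conjc U)^T.

Definition is_graph (e : rel V) := symmetric e /\ irreflexive e.

Definition general_qwalk (e : rel V) (U : 'M[R[i]]_N) :=
  U *m adjmx U = 1%:M /\
  (forall (a a' : 'I_d) (v v' : V),
      U (bidx a' v') (bidx a v) != 0 -> v' = v \/ e v v').

Definition Pt (U : 'M[R[i]]_N) (t : nat) (alpha0 : 'cV[R[i]]_N) (v : V) : R :=
  \sum_(a < d) sqmod ((U ^+ t *m alpha0) (bidx a v) ord0).

Definition Pbar (U : 'M[R[i]]_N) (T : nat) (alpha0 : 'cV[R[i]]_N) (v : V) : R :=
  T%:R^-1 * \sum_(t < T) Pt U t alpha0 v.

Definition is_distr (pi : V -> R) := (forall v, 0 <= pi v) /\ \sum_v pi v = 1.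

End QWalk.

From HB Require Import structures.
From mathcomp Require Import all_boot all_order all_algebra.
From mathcomp Require Import complex.
From mathcomp Require Import all_classical all_reals all_analysis.
From mathcomp Require Import ring.
Import Order.TTheory GRing.Theory Num.Theory.
Import numFieldNormedType.Exports.
Local Open Scope classical_set_scope.
Local Open Scope ring_scope.

(* Since U^t is unitary, each row of U^t has unit norm. Summing P_t(w | a,v)
   over all d|V| starting basis states therefore adds up the squared norms of
   the d rows indexed by (a',w), which gives d for every t and w; the same
   holds for the time averages. If all these averages tend to pi, the limit
   yields d |V| pi(w) = d. *)

Section UnitaryWalk.
Variables (R : realType) (d : nat) (V : finType).
Local Notation N := #|{: basisT d V}|.

Lemma adjmxM (A B : 'M[R[i]]_N) : adjmx (A *m B) = adjmx B *m adjmx A.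
Proof. by rewrite /adjmx map_mxM trmx_mul. Qed.

Lemma adjmx1 : adjmx (1%:M : 'M[R[i]]_N) = 1%:M.
Proof. by rewrite /adjmx map_mx1 trmx1. Qed.

Lemma unitaryX (U : 'M[R[i]]_N) (t : nat) :
  U *m adjmx U = 1%:M -> U ^+ t *m adjmx (U ^+ t) = 1%:M.
Proof.
move=> U_unitary; elim: t => [|t IHt]; first by rewrite expr0 adjmx1 mulmx1.
rewrite exprSr -mulmxE adjmxM mulmxA -(mulmxA (U ^+ t)) U_unitary mulmx1.
exact: IHt.
Qed.

Lemma mulc_conj (z : R[i]) : z * conjc z = (sqmod z)%:C%C.
Proof.
case: z => x y; apply/eqP; rewrite eq_complex /sqmod /=.
by apply/andP; split; apply/eqP; ring.
Qed.

Lemma unitary_row_sqmod (M : 'M[R[i]]_N) (r : 'I_N) :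
  M *m adjmx M = 1%:M -> \sum_j sqmod (M r j) = 1.
Proof.
move=> /(congr1 (fun A : 'M[R[i]]_N => A r r)); rewrite !mxE eqxx /= => Mrr.
apply: (@complexI R); rewrite rmorph_sum rmorph1; apply: etrans Mrr.
by apply: eq_bigr => j _; rewrite !mxE mulc_conj.
Qed.

Lemma sum_bidx (Z : nmodType) (F : 'I_N -> Z) :
  \sum_(a < d) \sum_v F (bidx a v) = \sum_j F j.
Proof.
rewrite pair_big /= (reindex (@enum_rank (basisT d V))) /=; last first.
  by exists enum_val => x _; rewrite ?enum_rankK ?enum_valK.
by apply: eq_bigr => -[a v].
Qed.

Lemma Pt_bvec (U : 'M[R[i]]_N) (t : nat) (a : 'I_d) (v w : V) :
  Pt U t (bvec R a v) w = \sum_(a' < d) sqmod ((U ^+ t) (bidx a' w) (bidx a v)).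
Proof.
apply: eq_bigr => a' _; congr sqmod.
rewrite /bvec mxE (bigD1 (bidx a v)) //= mxE !eqxx mulr1 big1 ?addr0 //.
by move=> j /negbTE j_neq; rewrite mxE j_neq mulr0.
Qed.

Lemma sum_Pt_bvec (U : 'M[R[i]]_N) (t : nat) (w : V) :
  U *m adjmx U = 1%:M -> \sum_(a < d) \sum_v Pt U t (bvec R a v) w = d%:R.
Proof.
move=> /(unitaryX _ t) Ut_unitary.
under eq_bigr => a _ do under eq_bigr => v _ do rewrite Pt_bvec.
under eq_bigr => a _ do rewrite exchange_big.
rewrite exchange_big /= (eq_bigr (fun=> 1)) ?sumr_const ?card_ord // => a' _.
by rewrite (sum_bidx _ (fun j => sqmod ((U ^+ t) (bidx a' w) j))) unitary_row_sqmod.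
Qed.

Lemma sum_Pbar_bvec (U : 'M[R[i]]_N) (T : nat) (w : V) :
  U *m adjmx U = 1%:M -> (0 < T)%N ->
  \sum_(a < d) \sum_v Pbar U T (bvec R a v) w = d%:R.
Proof.
move=> U_unitary T_gt0; rewrite /Pbar.
under eq_bigr => a _ do rewrite -mulr_sumr.
rewrite -mulr_sumr.
under eq_bigr => a _ do rewrite exchange_big.
rewrite exchange_big /=.
under eq_bigr => t _ do rewrite sum_Pt_bvec //.
by rewrite sumr_const card_ord -[d%:R *+ T]mulr_natl mulKf // pnatr_eq0 -lt0n.
Qed.

End UnitaryWalk.

Theorem mainTheorem4 (R : realType) (V : finType) (e : rel V) (d : nat)
    (U : 'M[R[i]]_#|{: basisT d V}|) (pi : V -> R) :
  is_graph e -> (0 < d)%N ->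
  general_qwalk e U ->
  is_distr pi ->
  (forall (a : 'I_d) (v w : V),
      (fun T : nat => Pbar U T (bvec R a v) w) @ \oo --> pi w) ->
  forall w : V, pi w = #|V|%:R^-1.
Proof.
move=> _ d_gt0 [U_unitary _] _ Pbar_lim w.
pose S T := \sum_(a < d) \sum_v Pbar U T (bvec R a v) w.
have S_lim : S @ \oo --> \sum_(a < d) \sum_(v : V) pi w.
  apply: cvg_big => [|a _]; first exact: add_continuous.
  apply: cvg_big => [|v _]; first exact: add_continuous.
  exact: Pbar_lim.
have S_cst : S @ \oo --> (d%:R : R).
  by apply: cvg_near_cst; exists 1%N => // T /= T_gt0; apply: sum_Pbar_bvec.
have piE : \sum_(a < d) \sum_(v : V) pi w = d%:R.
  by apply: (cvg_unique _ S_lim S_cst) => //; exact: fmap_proper_filter.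
have V_neq0 : (#|V|%:R : R) != 0 by rewrite pnatr_eq0 -lt0n; apply/card_gt0P; exists w.
have d_neq0 : (d%:R : R) != 0 by rewrite pnatr_eq0 -lt0n.
have {}piE : pi w * #|V|%:R * d%:R = d%:R.
  by rewrite !mulr_natr -piE !sumr_const card_ord.
by apply: (mulIf V_neq0); rewrite mulVf //; apply: (mulIf d_neq0); rewrite mul1r.
Qed.
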